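(* There exist, for all $n,i\in\mathbb Z$, non-commutative Laurent polynomials $P_{n,i}$ in two variables $X,Y$ (finite sums, with non-negative integer coefficients, of finite words in $X^{\pm1},Y^{\pm1}$) such that the following holds: for every unital algebra $\mathcal A$ (unit $\mathbf 1$) and every family $(\mathbf R_n)_{n\in\mathbb Z}$ of invertible elements of $\mathcal A$ satisfying the non-commutative $A_1$ $Q$-system $$\mathbf R_{n+1}\mathbf R_n^{-1}\mathbf R_{n-1}=\mathbf R_n+\mathbf R_n^{-1}\qquad(n\in\mathbb Z),$$ one has $\mathbf R_n=P_{n,i}(\mathbf R_i,\mathbf R_{i+1})$ for all $n,i\in\mathbb Z$. In words: the solutions are positive (non-negative integer coefficient) Laurent polynomials of any admissible initial data $\mathbf x_i=(\mathbf R_i,\mathbf R_{i+1})$. *)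

From HB Require Import structures.
From mathcomp Require Import all_boot all_order all_algebra.
Set Implicit Arguments. Unset Strict Implicit. Unset Printing Implicit Defensive.
Import GRing.Theory.
Local Open Scope ring_scope.

Inductive letter := LX | LXinv | LY | LYinv.

Definition word := seq letter.

(* A non-commutative Laurent polynomial in X, Y with non-negative integer
   coefficients, represented as a finite list of words (a coefficient c of a
   word is represented by c repetitions of that word). *)
Definition nclpoly := seq word.

Definition eval_letter (A : unitRingType) (x y : A) (l : letter) : A :=
  match l with
  | LX => x | LXinv => x^-1 | LY => y | LYinv => y^-1
  end.

Definition eval_word (A : unitRingType) (x y : A) (w : word) : A :=
  \prod_(l <- w) eval_letter x y l.

Definition eval_nclpoly (A : unitRingType) (x y : A) (P : nclpoly) : A :=
  \sum_(w <- P) eval_word x y w.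

Definition QsystemA1 (A : unitRingType) (R : int -> A) : Prop :=
  forall n : int, R (n + 1) * (R n)^-1 * R (n - 1) = R n + (R n)^-1.

From HB Require Import structures.
From mathcomp Require Import all_boot all_order all_algebra zify.
Set Implicit Arguments.
Unset Strict Implicit.
Unset Printing Implicit Defensive.

Import GRing.Theory.
Local Open Scope ring_scope.

(* Along a solution (f_k) of the Q-system, both
     C = f_{k+1}^-1 f_k f_{k+1} f_k^-1   and
     K = f_{k+2} f_{k+1}^-1 + C f_k f_{k+1}^-1
   are independent of k, so f_{k+2} = K f_{k+1} - C f_k.  Writing x = f_0,
   y = f_1 and D_k = y^-1 x f_{k+1} - C f_k, this becomes the subtraction-free
   system
     f_{k+2} = (y x^-1 + y^-1 x^-1) f_{k+1} + D_k,
     D_{k+1} = y^-1 x y^-1 x^-1 f_{k+1} + y^-1 x D_k,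
   whose coefficients are positive Laurent monomials in x, y.  Backward
   iteration is forward iteration in the opposite ring, which reverses words
   and exchanges the roles of x and y. *)

Definition nclpoly_mul (p q : nclpoly) : nclpoly := [seq u ++ v | u <- p, v <- q].

Definition swap_letter (l : letter) : letter :=
  match l with LX => LY | LXinv => LYinv | LY => LX | LYinv => LXinv end.

Definition nclpoly_rev_swap (p : nclpoly) : nclpoly :=
  [seq rev (map swap_letter w) | w <- p].

Section Evaluation.
Variables (A : unitRingType) (x y : A).

Lemma eval_word_cat (u v : word) :
  eval_word x y (u ++ v) = eval_word x y u * eval_word x y v.
Proof. by rewrite /eval_word big_cat. Qed.

Lemma eval_nclpoly_cat (p q : nclpoly) :
  eval_nclpoly x y (p ++ q) = eval_nclpoly x y p + eval_nclpoly x y q.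
Proof. by rewrite /eval_nclpoly big_cat. Qed.

Lemma eval_nclpoly_mul (p q : nclpoly) :
  eval_nclpoly x y (nclpoly_mul p q) = eval_nclpoly x y p * eval_nclpoly x y q.
Proof.
elim: p => [|u p IHp]; first by rewrite /eval_nclpoly !big_nil mul0r.
rewrite /nclpoly_mul /= eval_nclpoly_cat -/(nclpoly_mul p q) IHp.
rewrite [eval_nclpoly x y (u :: p)]/eval_nclpoly big_cons mulrDl; congr (_ + _).
rewrite /eval_nclpoly big_map mulr_sumr.
by apply: eq_bigr => v _; rewrite eval_word_cat.
Qed.

Lemma eval_nclpoly_word (w : word) : eval_nclpoly x y [:: w] = eval_word x y w.
Proof. by rewrite /eval_nclpoly big_cons big_nil addr0. Qed.

End Evaluation.

Lemma eval_nclpoly_opp (A : unitRingType) (x y : A) (p : nclpoly) :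
  @eval_nclpoly A^c x y p = eval_nclpoly y x (nclpoly_rev_swap p).
Proof.
rewrite /eval_nclpoly /nclpoly_rev_swap big_map; apply: eq_bigr => w _.
rewrite /eval_word rev_prodr -map_rev big_map.
by apply: eq_bigr => -[].
Qed.

Definition qsys_coefK : nclpoly := [:: [:: LY; LXinv]; [:: LYinv; LXinv]].
Definition qsys_coefM : nclpoly := [:: [:: LYinv; LX; LYinv; LXinv]].
Definition qsys_coefN : nclpoly := [:: [:: LYinv; LX]].

(* The pair (P_{k+1}, D_k) of polynomials expressing (f_{k+1}, D_k). *)
Fixpoint qsys_pair (k : nat) : nclpoly * nclpoly :=
  if k is k'.+1 then
    let: (p, d) := qsys_pair k' in
    (nclpoly_mul qsys_coefK p ++ d,
     nclpoly_mul qsys_coefM p ++ nclpoly_mul qsys_coefN d)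
  else ([:: [:: LY]], [::]).

Definition qsys_poly (k : nat) : nclpoly :=
  if k is k'.+1 then (qsys_pair k').1 else [:: [:: LX]].

Definition qsystem_nat (A : unitRingType) (f : nat -> A) : Prop :=
  forall k, f k.+2 * (f k.+1)^-1 * f k = f k.+1 + (f k.+1)^-1.

Section QsystemNat.
Variables (A : unitRingType) (f : nat -> A).
Hypothesis f_rec : qsystem_nat f.
Hypothesis f_unit : forall k, f k \is a GRing.unit.

Definition qsys_conj (k : nat) : A := (f k.+1)^-1 * f k * f k.+1 * (f k)^-1.

Definition qsys_lin (k : nat) : A :=
  f k.+2 * (f k.+1)^-1 + qsys_conj k * f k * (f k.+1)^-1.

Lemma qsys_ratio k : f k.+2 * (f k.+1)^-1 = (f k.+1 + (f k.+1)^-1) * (f k)^-1.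
Proof. by rewrite -f_rec mulrK. Qed.

Lemma qsys_conj_const k : qsys_conj k = qsys_conj 0.
Proof.
elim: k => // k <-; rewrite /qsys_conj.
have u1 := f_unit k.+1; have u2 := f_unit k.+2.
have hc : f k.+2 = (f k.+1 + (f k.+1)^-1) * (f k)^-1 * f k.+1.
  by rewrite -qsys_ratio mulrVK.
apply: (mulrI u2); rewrite !mulrA mulrV // mul1r f_rec {1}hc !mulrA mulrK //.
by rewrite mulrDl mulrDr mulVr // mulrV.
Qed.

Lemma qsys_lin_const k : qsys_lin k = qsys_lin 0.
Proof.
elim: k => // k <-; rewrite /qsys_lin (qsys_conj_const k) -(qsys_conj_const k.+1).
rewrite /qsys_conj qsys_ratio.
have u1 := f_unit k.+1; have u2 := f_unit k.+2.
have ha : f k = f k.+1 * (f k.+2)^-1 * (f k.+1 + (f k.+1)^-1).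
  by rewrite -f_rec !mulrA mulrVK // mulrV // mul1r.
have hG : (f k.+2)^-1 * f k.+1 * f k.+2 * (f k.+1)^-1 * f k.+1 * (f k.+2)^-1
          = (f k.+2)^-1 * f k.+1 by rewrite mulrVK // mulrK.
rewrite hG [in RHS]ha !mulrA hG mulrDr !mulrDl !mulrK //.
by rewrite [_ * f k.+1 + _]addrC addrA.
Qed.

Lemma qsys_linear k : f k.+2 = qsys_lin 0 * f k.+1 - qsys_conj 0 * f k.
Proof.
by rewrite -(qsys_lin_const k) -(qsys_conj_const k) /qsys_lin mulrDl !mulrVK // addrK.
Qed.

Lemma qsys_lin0 :
  qsys_lin 0 = f 1 * (f 0)^-1 + (f 1)^-1 * (f 0)^-1 + (f 1)^-1 * f 0.
Proof.
by rewrite /qsys_lin /qsys_conj qsys_ratio mulrDl mulrVK // mulrK.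
Qed.

Lemma qsys_pairE k :
  eval_nclpoly (f 0) (f 1) (qsys_pair k).1 = f k.+1 /\
  eval_nclpoly (f 0) (f 1) (qsys_pair k).2 =
    (f 1)^-1 * f 0 * f k.+1 - qsys_conj 0 * f k.
Proof.
set ev := eval_nclpoly (f 0) (f 1).
set N := (f 1)^-1 * f 0; set K := f 1 * (f 0)^-1 + (f 1)^-1 * (f 0)^-1.
set M := (f 1)^-1 * f 0 * (f 1)^-1 * (f 0)^-1.
have evK : ev qsys_coefK = K.
  by rewrite /ev /eval_nclpoly /eval_word !big_cons !big_nil /= !mulr1 addr0.
have evM : ev qsys_coefM = M.
  by rewrite /ev eval_nclpoly_word /eval_word !big_cons big_nil /= mulr1 !mulrA.
have evN : ev qsys_coefN = N.
  by rewrite /ev eval_nclpoly_word /eval_word !big_cons big_nil /= mulr1.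
have NK : N * K = qsys_conj 0 + M by rewrite mulrDr !mulrA.
elim: k => [|k].
  split; first by rewrite /ev eval_nclpoly_word /eval_word big_cons big_nil mulr1.
  by rewrite /ev /eval_nclpoly big_nil /qsys_conj /N -!mulrA mulVr ?mulr1 ?subrr.
rewrite /=; case: (qsys_pair k) => p d; cbn [fst snd] => -[evp evd].
have fS : f k.+2 = K * f k.+1 + (N * f k.+1 - qsys_conj 0 * f k).
  by rewrite qsys_linear qsys_lin0 -/N -/K mulrDl addrA.
rewrite /ev (eval_nclpoly_cat _ _ _ d) (eval_nclpoly_cat _ _ _ (nclpoly_mul _ d)).
rewrite !eval_nclpoly_mul -/ev evK evM evN evp evd -fS.
split=> //; rewrite [in RHS]fS [in RHS]mulrDr mulrA NK mulrDl.
by rewrite [in RHS]addrAC [qsys_conj 0 * _ + _]addrC addrK.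
Qed.

Lemma qsys_polyE k : f k = eval_nclpoly (f 0) (f 1) (qsys_poly k).
Proof.
case: k => [|k]; last by rewrite (proj1 (qsys_pairE k)).
by rewrite eval_nclpoly_word /eval_word big_cons big_nil mulr1.
Qed.

End QsystemNat.

Lemma qsystem_nat_shift (A : unitRingType) (R : int -> A) (i : int) :
  QsystemA1 R -> qsystem_nat (fun m : nat => R (m%:Z + i)).
Proof.
move=> hR m; have := hR (m.+1%:Z + i).
have -> : m.+1%:Z + i + 1 = m.+2%:Z + i by lia.
by have -> : m.+1%:Z + i - 1 = m%:Z + i by lia.
Qed.

Lemma qsystem_nat_reflect (A : unitRingType) (R : int -> A) (j : int) :
  QsystemA1 R -> qsystem_nat (fun m : nat => R (j - m%:Z) : A^c).
Proof.
move=> hR m; have := hR (j - m.+1%:Z).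
have -> : j - m.+1%:Z + 1 = j - m%:Z by lia.
have -> : j - m.+1%:Z - 1 = j - m.+2%:Z by lia.
by rewrite -mulrA.
Qed.

(* [Negz k] is [-(k+1)]: then [n = (i + 1) - (k + 2)], which is reached by
   k + 2 backward steps from [R (i + 1)]. *)
Definition qsys_laurent (n i : int) : nclpoly :=
  match n - i with
  | Posz k => qsys_poly k
  | Negz k => nclpoly_rev_swap (qsys_poly k.+2)
  end.

Theorem mainTheorem12 :
  exists P : int -> int -> nclpoly,
    forall (K : fieldType) (A : unitAlgType K) (R : int -> A),
      (forall n : int, R n \is a GRing.unit) ->
      QsystemA1 R ->
      forall n i : int, R n = eval_nclpoly (R i) (R (i + 1)) (P n i).
Proof.
exists qsys_laurent => K A R R_unit hR n i; rewrite /qsys_laurent.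
case: (n - i) (subrK i n) => [k|k] <-.
- rewrite (qsys_polyE (qsystem_nat_shift i hR) (fun m => R_unit _) k).
  by rewrite add0r addrC.
- rewrite -eval_nclpoly_opp.
  have -> : Negz k + i = i + 1 - k.+2%:Z by lia.
  rewrite (qsys_polyE (qsystem_nat_reflect (i + 1) hR) (fun m => R_unit _) k.+2).
  by rewrite subr0 addrK.
Qed.
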